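(* For every $d \in \{2,3,4,5,8,12,16\}$, there are at most finitely many positive integers $n$ for which $\left\lfloor n^2/d \right\rfloor$ is prime. *)

From mathcomp Require Import all_boot.

(** For each listed [d], every square is congruent modulo [d] to one of
    [0, 1, 4, 9] below [d], i.e. [n ^ 2 = (n ^ 2 %/ d) * d + t ^ 2] with
    [t < d].  Hence [(n ^ 2 %/ d) * d = (n - t) * (n + t)], and for [n >= 2 d]
    both factors exceed [d].  A prime [p] cannot satisfy [p * d = x * y] with
    [x, y > d]: [p] divides one factor, and the cofactor then divides [d]. *)

From mathcomp Require Import all_boot zify.

Lemma not_prime_mul_factor_gt p d x y :
  x * y = p * d -> d < x -> d < y -> ~~ prime p.
Proof.
move=> xy_pd d_x d_y; apply/negP => p_pr.
wlog p_x : x y xy_pd d_x d_y / p %| x => [hwlog|].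
  have := dvdn_mulr d (dvdnn p); rewrite -xy_pd (Euclid_dvdM _ _ p_pr).
  case/orP => [p_x | p_y]; first exact: hwlog x y xy_pd d_x d_y p_x.
  by apply: (hwlog y x _ d_y d_x p_y); rewrite mulnC.
have [c def_x] := dvdnP p_x.
have cy_d : c * y = d.
  by apply/eqP; rewrite -(eqn_pmul2r (prime_gt0 p_pr)) mulnAC -def_x xy_pd mulnC.
have c_gt0 : 0 < c by rewrite lt0n; apply: contraTneq d_x => c0; rewrite def_x c0.
by move: d_y; rewrite -cy_d ltnNge leq_pmull.
Qed.

Definition square_residues_are_squares (d : nat) : bool :=
  all (fun r => has (fun t => r ^ 2 %% d == t ^ 2) (iota 0 d)) (iota 0 d).

Lemma square_residueP n d : 0 < d -> square_residues_are_squares d ->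
  exists2 t, t < d & n ^ 2 %% d = t ^ 2.
Proof.
move=> d_gt0 /allP/(_ (n %% d)); rewrite mem_iota ltn_mod d_gt0 => /(_ isT).
by case/hasP=> t; rewrite mem_iota modnXm => t_lt /eqP; exists t.
Qed.

Lemma prime_sqr_divn_lt d n : 0 < d -> square_residues_are_squares d ->
  prime (n ^ 2 %/ d) -> n < 2 * d.
Proof.
move=> d_gt0 /(square_residueP n d d_gt0) [t t_lt mod_t].
rewrite ltnNge; apply: contraL => n_ge.
apply: (@not_prime_mul_factor_gt _ d (n - t) (n + t)).
- by rewrite -subn_sqr {1}(divn_eq (n ^ 2) d) mod_t addnK.
- lia.
- lia.
Qed.

Theorem theorem1 (d : nat) (hd : d \in [:: 2; 3; 4; 5; 8; 12; 16]) :
  exists N : nat, forall n : nat, 0 < n -> prime (n ^ 2 %/ d) -> n <= N.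
Proof.
have d_gt0 : 0 < d by case: d hd.
have listed : all square_residues_are_squares [:: 2; 3; 4; 5; 8; 12; 16] by [].
by exists (2 * d) => n _ /(prime_sqr_divn_lt d n d_gt0 (allP listed d hd))/ltnW.
Qed.
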